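(* Let $n,m,v\ge1$, let $\Omega$ be a simple witness for a memory system $S(n,m,v)$, let $\lambda$ be a permutation of $\mathbb{N}_n$, and let $\tau,\tau'$ be unambiguous traces of $S(n,m,v)$ with $\tau'=\lambda^p(\tau)$. Then for all $1\le x,y\le|\tau|$ and all $1\le i\le m$: $\langle x,y\rangle\in\Omega^e(\tau,i)$ if and only if $\langle x,y\rangle\in\Omega^e(\tau',i)$.
   Context: $\mathbb{N}_n=\{1,\dots,n\}$, $\mathbb{W}_v=\{0,\dots,v\}$. Memory events $E(n,m,v)=\{R,W\}\times\mathbb{N}_n\times\mathbb{N}_m\times\mathbb{W}_v$; for $e=\langle a,b,c,d\rangle$, $op(e)=a$, $proc(e)=b$, $loc(e)=c$, $data(e)=d$; $0$ models the initial value of every location. A memory system $S(n,m,v)$ is a regular set of finite runs over an alphabet containing $E(n,m,v)$ (other letters being internal events); a trace is the subsequence of memory events of a run. For a sequence $\tau$ of memory events: $L(\tau,j)=\{k: loc(\tau(k))=j\}$, $L^w(\tau,j)=\{k\in L(\tau,j): op(\tau(k))=W\}$. A trace $\tau$ is unambiguous if for every location $j$ and $x\in L^w(\tau,j)$, $data(\tau(x))\ne0$ and $data(\tau(x))\ne data(\tau(y))$ for all $y\in L^w(\tau,j)\setminus\{x\}$. A witness $\Omega$ assigns to each trace $\tau$ and location $j$ a strict total order $\Omega(\tau,j)$ on $L^w(\tau,j)$; it is simple if $\langle x,y\rangle\in\Omega(\tau,j)$ iff $x<y$, for all $x,y\in L^w(\tau,j)$. For unambiguous $\tau$, $\Omega^e(\tau,j)\subseteq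 L(\tau,j)^2$: $\langle x,y\rangle\in\Omega^e(\tau,j)$ iff (1) $data(\tau(x))=data(\tau(y))$, $op(\tau(x))=W$, $op(\tau(y))=R$; or (2) $data(\tau(x))=0$ and $data(\tau(y))\ne0$; or (3) there are $a,b\in L^w(\tau,j)$ with $\langle a,b\rangle\in\Omega(\tau,j)$, $data(\tau(a))=data(\tau(x))$, $data(\tau(b))=data(\tau(y))$. For a permutation $\lambda$ of $\mathbb{N}_n$, $\lambda^p(\langle a,b,c,d\rangle)=\langle a,\lambda(b),c,d\rangle$, extended letterwise to sequences. *)

From mathcomp Require Import all_boot.
Set Implicit Arguments. Unset Strict Implicit. Unset Printing Implicit Defensive.

Inductive op_t := Rd | Wr.

Record mevent := MEv { op : op_t; proc : nat; loc : nat; data : nat }.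

Definition is_event (n m v : nat) (e : mevent) : Prop :=
  [/\ 1 <= proc e <= n, 1 <= loc e <= m & data e <= v].

(* Runs are finite words over E(n,m,v) + internal events I. *)
Definition letter (I : Type) := (mevent + I)%type.

Definition regular (A : Type) (L : seq A -> Prop) : Prop :=
  exists (Q : finType) (q0 : Q) (d : Q -> A -> Q) (F : pred Q),
    forall w, L w <-> F (foldl d q0 w).

(* Memory system S(n,m,v): a regular set of finite runs over the finite
   alphabet E(n,m,v) + I. *)
Definition memory_system (n m v : nat) (I : finType)
    (S : seq (letter I) -> Prop) : Prop :=
  regular S /\
  (forall r, S r -> forall k, k < size r ->
     match nth (inr (0 : nat)) (map (fun a => match a with
                 inl e => inl e | inr _ => inr 0 end) r) k with
     | inl e => is_event n m v e | inr _ => True end).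

Definition trace_of (I : Type) (r : seq (letter I)) : seq mevent :=
  pmap (fun a => match a with inl e => Some e | inr _ => None end) r.

Definition is_trace (I : Type) (S : seq (letter I) -> Prop) (t : seq mevent) :=
  exists r, S r /\ trace_of r = t.

(* 1-based access tau(k). *)
Definition ev_at (t : seq mevent) (k : nat) : mevent := nth (MEv Rd 0 0 0) t k.-1.

Definition inL (t : seq mevent) (j k : nat) : Prop :=
  1 <= k <= size t /\ loc (ev_at t k) = j.

Definition inLw (t : seq mevent) (j k : nat) : Prop :=
  inL t j k /\ op (ev_at t k) = Wr.

Definition unambiguous (t : seq mevent) : Prop :=
  forall j x, inLw t j x ->
    data (ev_at t x) <> 0 /\
    (forall y, inLw t j y -> y <> x -> data (ev_at t x) <> data (ev_at t y)).

(* A witness: Omega tau j is a relation on positions. *)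
Definition witness_rel := seq mevent -> nat -> nat -> nat -> Prop.

Definition witness (m : nat) (I : Type) (S : seq (letter I) -> Prop)
    (Om : witness_rel) : Prop :=
  forall t j, is_trace S t -> 1 <= j <= m ->
    [/\ (forall x y, Om t j x y -> inLw t j x /\ inLw t j y),
        (forall x, ~ Om t j x x),
        (forall x y z, Om t j x y -> Om t j y z -> Om t j x z) &
        (forall x y, inLw t j x -> inLw t j y -> x <> y ->
           Om t j x y \/ Om t j y x)].

Definition simple_witness (m : nat) (I : Type) (S : seq (letter I) -> Prop)
    (Om : witness_rel) : Prop :=
  witness m S Om /\
  forall t j x y, is_trace S t -> 1 <= j <= m ->
    inLw t j x -> inLw t j y -> (Om t j x y <-> x < y).

Definition Omega_e (Om : witness_rel) (t : seq mevent) (j x y : nat) : Prop :=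
  inL t j x /\ inL t j y /\
  [\/ (data (ev_at t x) = data (ev_at t y) /\
       op (ev_at t x) = Wr /\ op (ev_at t y) = Rd),
      (data (ev_at t x) = 0 /\ data (ev_at t y) <> 0) |
      (exists a b, inLw t j a /\ inLw t j b /\ Om t j a b /\
         data (ev_at t a) = data (ev_at t x) /\
         data (ev_at t b) = data (ev_at t y))].

Definition perm_of (n : nat) (lam : nat -> nat) : Prop :=
  (forall i, 1 <= i <= n -> 1 <= lam i <= n) /\
  (forall i k, 1 <= i <= n -> 1 <= k <= n -> lam i = lam k -> i = k).

Definition lam_p (lam : nat -> nat) (e : mevent) : mevent :=
  MEv (op e) (lam (proc e)) (loc e) (data e).

From mathcomp Require Import all_boot.
Set Implicit Arguments. Unset Strict Implicit. Unset Printing Implicit Defensive.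

(* Omega^e(tau, j) only depends on the operation, location and data of the
   events of tau, and on Omega(tau, j) over the write positions of location j.
   Relabelling processes changes neither the former nor, for a simple witness,
   the latter, which is the order of positions in both traces. *)

Definition erase_proc (e : mevent) : op_t * nat * nat := (op e, loc e, data e).

Lemma erase_proc_lam_p lam t : map erase_proc (map (lam_p lam) t) = map erase_proc t.
Proof. by rewrite -map_comp. Qed.

Section SameUpToProcesses.

Variables t t' : seq mevent.
Hypothesis erase_tt' : map erase_proc t = map erase_proc t'.

Lemma size_erase : size t = size t'.
Proof. by rewrite -(size_map erase_proc t) erase_tt' size_map. Qed.

Lemma erase_proc_ev_at k : erase_proc (ev_at t k) = erase_proc (ev_at t' k).
Proof.
set d := MEv Rd 0 0 0; rewrite /ev_at.
have [lt_kt | le_tk] := ltnP k.-1 (size t).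
  by rewrite -!(nth_map d (erase_proc d)) -?size_erase // erase_tt'.
by rewrite !nth_default -?size_erase.
Qed.

Lemma op_ev_at k : op (ev_at t k) = op (ev_at t' k).
Proof. by case: (erase_proc_ev_at k). Qed.

Lemma loc_ev_at k : loc (ev_at t k) = loc (ev_at t' k).
Proof. by case: (erase_proc_ev_at k). Qed.

Lemma data_ev_at k : data (ev_at t k) = data (ev_at t' k).
Proof. by case: (erase_proc_ev_at k). Qed.

Lemma inL_erase j k : inL t j k -> inL t' j k.
Proof. by rewrite /inL size_erase loc_ev_at. Qed.

Lemma inLw_erase j k : inLw t j k -> inLw t' j k.
Proof. by rewrite /inLw op_ev_at => -[/inL_erase]. Qed.

Lemma Omega_e_erase (Om : witness_rel) j x y :
    (forall a b, inLw t j a -> inLw t j b -> Om t j a b -> Om t' j a b) ->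
  Omega_e Om t j x y -> Omega_e Om t' j x y.
Proof.
move=> Om_tt' [/inL_erase Lx [/inL_erase Ly cases]]; do 2!split=> //.
rewrite -!op_ev_at -!data_ev_at.
case: cases => [? | ? | [a [b [La [Lb [Oab [Da Db]]]]]]]; [exact: Or31 | exact: Or32 |].
apply: Or33; exists a, b; rewrite -!data_ev_at.
by do 2!(split; first exact: inLw_erase); split; first exact: Om_tt'.
Qed.

End SameUpToProcesses.

Lemma simple_witness_erase m (I : Type) (S : seq (letter I) -> Prop) Om t t' j a b :
    simple_witness m S Om -> is_trace S t -> is_trace S t' ->
    map erase_proc t = map erase_proc t' -> 1 <= j <= m ->
    inLw t j a -> inLw t j b ->
  Om t j a b -> Om t' j a b.
Proof.
move=> [_ Om_lt] St St' erase_tt' jm La Lb.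
have [La' Lb'] : inLw t' j a /\ inLw t' j b by split; exact: (inLw_erase erase_tt').
by move/(Om_lt _ _ _ _ St jm La Lb)/(Om_lt _ _ _ _ St' jm La' Lb').
Qed.

Lemma simple_witness_Omega_e_erase m (I : Type) (S : seq (letter I) -> Prop)
    Om t t' j x y :
    simple_witness m S Om -> is_trace S t -> is_trace S t' ->
    map erase_proc t = map erase_proc t' -> 1 <= j <= m ->
  Omega_e Om t j x y -> Omega_e Om t' j x y.
Proof.
move=> simple_Om St St' erase_tt' jm; apply: (Omega_e_erase erase_tt') => a b.
exact: simple_witness_erase simple_Om St St' erase_tt' jm.
Qed.

Theorem lemma7p2 (n m v : nat) (I : finType) (S : seq (letter I) -> Prop)
    (Om : witness_rel) (lam : nat -> nat) (t t' : seq mevent) :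
  1 <= n -> 1 <= m -> 1 <= v ->
  memory_system n m v S ->
  simple_witness m S Om ->
  perm_of n lam ->
  is_trace S t -> is_trace S t' ->
  unambiguous t -> unambiguous t' ->
  t' = map (lam_p lam) t ->
  forall x y i, 1 <= x <= size t -> 1 <= y <= size t -> 1 <= i <= m ->
    (Omega_e Om t i x y <-> Omega_e Om t' i x y).
Proof.
move=> _ _ _ _ simple_Om _ St St' _ _ t'E x y i _ _ im.
have erase_tt' : map erase_proc t = map erase_proc t' by rewrite t'E erase_proc_lam_p.
by split; apply: simple_witness_Omega_e_erase simple_Om _ _ _ im.
Qed.
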